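(* Let $x_1,\dots,x_r\in\mathbb R^s$, $c_1,\dots,c_r\in\{-1,1\}$, $\lambda>0$ and $\mu\in\mathbb R^r$ with $\mu>0$. Consider the primal problem $$\min_{\omega\in\mathbb R^s,\ \omega_0\in\mathbb R}\ \tfrac12\|\omega\|^2+\lambda\sum_{i=1}^r h\big(1-c_i(\langle\omega,x_i\rangle+\omega_0)\big),$$ where $h(t)=1$ if $t>0$ and $h(t)=0$ otherwise, and the dual problem $$\inf_{z\in\mathbb R^r}\ \tfrac12\Big\|\sum_{i=1}^r c_iz_ix_i\Big\|^2-\sum_{i=1}^r z_i+\sum_{i=1}^r\mu_i\mathbf 1_{\{z_i\neq0\}}\quad\text{s.t.}\quad \sum_{i=1}^r c_iz_i=0,\ z\ge0.$$ Then the primal problem always has a global minimizer, and the dual problem has a global minimizer if and only if there exist $\omega\in\mathbb R^s$, $\omega_0\in\mathbb R$ with $c_i(\langle\omega,x_i\rangle+\omega_0)\ge1$ for all $i\in[r]$.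
   Context: $\mathbf 1_{\{z_i\neq0\}}$ equals $1$ if $z_i\ne0$ and $0$ otherwise; $[r]=\{1,\dots,r\}$. *)

From HB Require Import structures.
From mathcomp Require Import all_boot all_order all_algebra.
From mathcomp Require Import reals.
Set Implicit Arguments. Unset Strict Implicit. Unset Printing Implicit Defensive.
Import Order.TTheory GRing.Theory Num.Theory.
Local Open Scope ring_scope.

Section Defs.
Variable R : realType.

Definition dotv (s : nat) (u v : 'rV[R]_s) : R := \sum_(j < s) u 0 j * v 0 j.
Definition sqnorm (s : nat) (u : 'rV[R]_s) : R := dotv u u.

Definition step01 (t : R) : R := if 0 < t then 1 else 0.

Definition ind_nz (t : R) : R := if t != 0 then 1 else 0.

Definition primal_obj (r s : nat) (x : 'I_r -> 'rV[R]_s) (c : 'I_r -> R)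
  (lam : R) (w : 'rV[R]_s) (w0 : R) : R :=
  2^-1 * sqnorm w + lam * \sum_(i < r) step01 (1 - c i * (dotv w (x i) + w0)).

Definition dual_obj (r s : nat) (x : 'I_r -> 'rV[R]_s) (c : 'I_r -> R)
  (mu : 'I_r -> R) (z : 'I_r -> R) : R :=
  2^-1 * sqnorm (\sum_(i < r) (c i * z i) *: x i) - \sum_(i < r) z i
  + \sum_(i < r) mu i * ind_nz (z i).

Definition dual_feasible (r : nat) (c : 'I_r -> R) (z : 'I_r -> R) : Prop :=
  \sum_(i < r) c i * z i = 0 /\ (forall i, 0 <= z i).

End Defs.

From HB Require Import structures.
From mathcomp Require Import all_boot all_order all_algebra.
From mathcomp Require Import reals classical_sets boolp functions.
From mathcomp Require Import topology normedtype derive.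
From mathcomp Require Import ring lra.
Import Order.TTheory GRing.Theory Num.Theory.
Import numFieldTopology.Exports numFieldNormedType.Exports.
Set Implicit Arguments. Unset Strict Implicit. Unset Printing Implicit Defensive.
Local Open Scope classical_set_scope.
Local Open Scope ring_scope.

(* Primal: the objective is (1/2)|w|^2 plus lam times the number of violated
   margin constraints.  For a set S of indices, the w admitting an offset that
   satisfies the constraints in S form a closed set, cut out by the pairwise
   conditions <w, x_i - x_j> >= 2 for c_i = 1, c_j = -1; so |w| attains its
   minimum there, and the best of these finitely many candidates is a global
   minimizer.
   Dual, separable case: a separator (w, w0) forces sum z <= 2|w|^2 wherever the
   dual objective is nonpositive, so the dual reduces to minimizing a continuous
   function on finitely many compact pieces, one for each support.
   Dual, non-separable case (Gordan's alternative): the minimum-norm point of the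
   convex hull of the lifted points (c_i x_i, c_i) would give a separator after
   rescaling, so it is zero; its barycentric coordinates d satisfy d >= 0,
   sum d = 1, sum c_i d_i = 0 and sum c_i d_i x_i = 0, and along the ray t d the
   dual objective decreases to -oo. *)

Section RealContinuity.
Context {R : realType} {T : topologicalType}.
Implicit Types f g : T -> R.

Lemma continuous_sum I (s : seq I) (P : pred I) (F : I -> T -> R) :
  (forall i, continuous (F i)) -> continuous (fun t => \sum_(i <- s | P i) F i t).
Proof.
move=> Fc; rewrite -fct_sumE; apply: (big_ind (fun f : T -> R => continuous f)) => //.
  exact: cst_continuous.
by move=> f g fc gc t; apply: continuousD; [exact: fc|exact: gc].
Qed.

Lemma closed_le_continuous f g :
  continuous f -> continuous g -> closed [set t | f t <= g t].
Proof.
move=> fc gc; have -> : [set t | f t <= g t] = (g - f) @^-1` [set u | 0 <= u].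
  by apply/seteqP; split => t /=; rewrite subr_ge0.
apply: preimage_closed; last exact: closed_ge.
by move=> t _; apply: continuousB; [exact: gc|exact: fc].
Qed.

Lemma closed_eq_continuous f g :
  continuous f -> continuous g -> closed [set t | f t = g t].
Proof.
move=> fc gc.
have -> : [set t | f t = g t] = [set t | f t <= g t] `&` [set t | g t <= f t].
  by apply/seteqP; split => t /= => [->|[fg gf]]; [|apply/le_anti/andP].
by apply: closedI; apply: closed_le_continuous.
Qed.

Lemma closed_forall_imp I (P : I -> Prop) (A : I -> set T) :
  (forall i, closed (A i)) -> closed [set t | forall i, P i -> A i t].
Proof. by move=> Acl; apply: closed_bigI. Qed.

Lemma closed_forall I (A : I -> set T) :
  (forall i, closed (A i)) -> closed [set t | forall i, A i t].
Proof.
move=> /(closed_forall_imp (P := fun=> True)).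
have -> // : [set t | forall i, True -> A i t] = [set t | forall i, A i t].
by apply/seteqP; split => t /= At i //; apply: At.
Qed.

End RealContinuity.

Section Euclid.
Context {R : realType}.
Implicit Types (n : nat) (a : R).

Lemma dotvC n (u v : 'rV[R]_n) : dotv u v = dotv v u.
Proof. by apply: eq_bigr => j _; rewrite mulrC. Qed.

Lemma dotvDr n (u v w : 'rV[R]_n) : dotv w (u + v) = dotv w u + dotv w v.
Proof. by rewrite /dotv -big_split; apply: eq_bigr => j _; rewrite mxE mulrDr. Qed.

Lemma dotvZr n a (u w : 'rV[R]_n) : dotv w (a *: u) = a * dotv w u.
Proof. by rewrite /dotv mulr_sumr; apply: eq_bigr => j _; rewrite mxE mulrCA. Qed.

Lemma dotvZl n a (u w : 'rV[R]_n) : dotv (a *: u) w = a * dotv u w.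
Proof. by rewrite dotvC dotvZr dotvC. Qed.

Lemma dotvBr n (u v w : 'rV[R]_n) : dotv w (u - v) = dotv w u - dotv w v.
Proof. by rewrite -scaleN1r dotvDr dotvZr mulN1r. Qed.

Lemma dotv_sumr n I (s : seq I) (P : pred I) (F : I -> 'rV[R]_n) w :
  dotv w (\sum_(i <- s | P i) F i) = \sum_(i <- s | P i) dotv w (F i).
Proof.
rewrite /dotv exchange_big; apply: eq_bigr => j _.
by rewrite summxE mulr_sumr.
Qed.

Lemma dotv_row_mx n1 n2 (u u' : 'rV[R]_n1) (v v' : 'rV[R]_n2) :
  dotv (row_mx u v) (row_mx u' v') = dotv u u' + dotv v v'.
Proof.
rewrite /dotv big_split_ord; congr (_ + _); apply: eq_bigr => j _.
  by rewrite !row_mxEl.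
by rewrite !row_mxEr.
Qed.

Lemma sqnormD n (u v : 'rV[R]_n) :
  sqnorm (u + v) = sqnorm u + 2 * dotv u v + sqnorm v.
Proof. by rewrite /sqnorm dotvDr !(dotvC (u + v)) !dotvDr (dotvC v u); ring. Qed.

Lemma sqnormZ n a (u : 'rV[R]_n) : sqnorm (a *: u) = a ^+ 2 * sqnorm u.
Proof. by rewrite /sqnorm dotvZl dotvZr mulrA expr2. Qed.

Lemma sqnorm_ge0 n (u : 'rV[R]_n) : 0 <= sqnorm u.
Proof. by apply: sumr_ge0 => j _; rewrite -expr2 sqr_ge0. Qed.

Lemma sqr_coord_le_sqnorm n (u : 'rV[R]_n) j : u ord0 j ^+ 2 <= sqnorm u.
Proof.
rewrite /sqnorm /dotv (bigD1 j) //= -expr2 lerDl.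
by apply: sumr_ge0 => k _; rewrite -expr2 sqr_ge0.
Qed.

Lemma sqnorm0 n : sqnorm (0 : 'rV[R]_n) = 0.
Proof. by rewrite /sqnorm /dotv big1 // => j _; rewrite mxE mul0r. Qed.

Lemma sqnorm_eq0 n (u : 'rV[R]_n) : (sqnorm u == 0) = (u == 0).
Proof.
apply/eqP/eqP => [u0|->]; last exact: sqnorm0.
apply/rowP => j; rewrite mxE; apply/eqP; rewrite -sqrf_eq0 eq_le sqr_ge0 andbT.
by rewrite -u0 sqr_coord_le_sqnorm.
Qed.

Lemma normr_coord_le n (u : 'rV[R]_n) j : `|u ord0 j| <= 1 + sqnorm u.
Proof.
have := sqr_coord_le_sqnorm u j; rewrite -real_normK ?num_real // => le_sq.
have := normr_ge0 (u ord0 j); nra.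
Qed.

Lemma continuous_dotv (T : topologicalType) n (f g : T -> 'rV[R]_n) :
  (forall j, continuous (fun t => f t ord0 j)) ->
  (forall j, continuous (fun t => g t ord0 j)) ->
  continuous (fun t => dotv (f t) (g t)).
Proof.
by move=> fc gc; apply: continuous_sum => j t; apply: continuousM; [exact: fc|exact: gc].
Qed.

Lemma continuous_mulmx_coord m n (A : 'M[R]_(m, n)) k :
  continuous (fun v : 'rV[R]_m => (v *m A) ord0 k).
Proof.
have -> : (fun v : 'rV[R]_m => (v *m A) ord0 k) = fun v => \sum_i v ord0 i * A i k.
  by apply/funext => v; rewrite mxE.
apply: continuous_sum => i v.
by apply: continuousM; [exact: coord_continuous|exact: cst_continuous].
Qed.

End Euclid.

Section Minimizers.
Context {R : realType}.

Lemma rV_closed_bounded_min n (f : 'rV[R]_n -> R) (A : set 'rV[R]_n) (M : R) :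
  A !=set0 -> closed A -> (forall v, A v -> forall j, `|v ord0 j| <= M) ->
  continuous f -> exists2 v, A v & forall u, A u -> f v <= f u.
Proof.
move=> A0 Acl Ab fc.
have cA : compact A.
  apply: bounded_closed_compact => //; exists `|M|; split; first exact: num_real.
  move=> M' MM' v Av /=; rewrite [leLHS]/Num.norm /= mx_normrE.
  apply: bigmax_le; first by apply: ltW; apply: le_lt_trans MM'.
  move=> [i j] _ /=; rewrite (ord1 i); apply: ltW.
  exact: le_lt_trans (le_trans (Ab _ Av j) (ler_norm M)) MM'.
have [v vA vmin] := EVT_min_rV A0 cA (continuous_subspaceT fc).
by exists v; [rewrite inE in vA|move=> u Au; apply: vmin; rewrite inE].
Qed.

Lemma closed_min_sqnorm n (A : set 'rV[R]_n) :
  A !=set0 -> closed A -> exists2 w, A w & forall u, A u -> sqnorm w <= sqnorm u.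
Proof.
move=> [u0 Au0] Acl.
pose B := A `&` [set u | sqnorm u <= sqnorm u0].
have sqnorm_cont : continuous (fun u : 'rV[R]_n => sqnorm u).
  by apply: continuous_dotv => j; exact: coord_continuous.
have [w [Aw wB] wmin] : exists2 w, B w & forall u, B u -> sqnorm w <= sqnorm u.
  apply: (rV_closed_bounded_min (M := 1 + sqnorm u0) _ _ _ sqnorm_cont).
  - by exists u0; split => /=.
  - apply: closedI => //; apply: closed_le_continuous; first exact: sqnorm_cont.
    exact: cst_continuous.
  - by move=> u [_ uB] j; apply: le_trans (normr_coord_le u j) _; rewrite lerD2l.
exists w => // u Au; have [uB|Bu] := leP (sqnorm u) (sqnorm u0).
  exact: wmin.
exact: le_trans wB (ltW Bu).
Qed.

Definition simplex m : set 'rV[R]_m :=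
  [set d | (forall i, 0 <= d ord0 i) /\ \sum_i d ord0 i = 1].

Lemma simplex_delta m (j : 'I_m) : simplex (delta_mx 0 j).
Proof.
split=> [i|]; first by rewrite mxE ler0n.
by rewrite (bigD1 j) //= big1 => [|i /negbTE ij]; rewrite mxE ?eqxx ?ij ?addr0.
Qed.

Lemma simplex_segment m (d e : 'rV[R]_m) t :
  simplex d -> simplex e -> 0 <= t <= 1 -> simplex (d + t *: (e - d)).
Proof.
move=> [d0 d1] [e0 e1] /andP[t0 t1]; split=> [i|].
  rewrite !mxE; have := d0 i; have := e0 i; nra.
under eq_bigr do rewrite !mxE.
by rewrite big_split /= -mulr_sumr sumrB d1 e1 subrr mulr0 addr0.
Qed.

Lemma closed_simplex m : closed (@simplex m).
Proof.
apply: closedI.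
  apply: closed_forall => i; apply: closed_le_continuous;
    [exact: cst_continuous|exact: coord_continuous].
apply: closed_eq_continuous; last exact: cst_continuous.
by apply: continuous_sum => i; exact: coord_continuous.
Qed.

Lemma ge0_of_quadratic_ge0 (a q : R) : 0 <= q ->
  (forall t, 0 < t <= 1 -> 0 <= t * a + t ^+ 2 * q) -> 0 <= a.
Proof.
move=> q0 hq; rewrite leNgt; apply/negP => a0.
(* t := -a / (q - a + 1) lies in (0, 1] and satisfies t q < -a. *)
have D0 : 0 < q - a + 1 by lra.
pose t := - a / (q - a + 1).
have t0 : 0 < t by rewrite divr_gt0 // oppr_gt0.
have t1 : t <= 1 by rewrite ler_pdivrMr // mul1r; lra.
have tq : t * q < - a.
  by rewrite -[X in _ < X](divfK (lt0r_neq0 D0)) -/t ltr_pM2l //; lra.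
have := hq t; rewrite t0 t1 => /(_ isT); rewrite expr2; nra.
Qed.

Lemma simplex_min_norm m n (Y : 'M[R]_(m, n)) : (0 < m)%N ->
  exists2 d, simplex d & forall j, sqnorm (d *m Y) <= dotv (d *m Y) (row j Y).
Proof.
move=> m_gt0.
have [d dS dmin] : exists2 d, simplex d &
    forall e, simplex e -> sqnorm (d *m Y) <= sqnorm (e *m Y).
  apply: (rV_closed_bounded_min (M := 1)).
  - by exists (delta_mx 0 (Ordinal m_gt0)); exact: simplex_delta.
  - exact: closed_simplex.
  - move=> e [e0 e1] j; rewrite ger0_norm // -e1 (bigD1 j) //= lerDl.
    exact: sumr_ge0.
  - by apply: continuous_dotv => k; exact: continuous_mulmx_coord.
(* First-order condition for moving from d towards the vertex j. *)
exists d => // j; set p := d *m Y.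
suff : 0 <= 2 * dotv p (row j Y - p) by rewrite dotvBr /sqnorm; lra.
apply: (ge0_of_quadratic_ge0 (sqnorm_ge0 (row j Y - p))) => t /andP[t0 t1].
have t01 : 0 <= t <= 1 by rewrite ltW.
have := dmin _ (simplex_segment dS (simplex_delta j) t01).
rewrite mulmxDl -scalemxAl mulmxBl -rowE -/p [sqnorm (p + _)]sqnormD sqnormZ dotvZr; lra.
Qed.

Lemma exists_between (I : finType) (L U : pred I) (a b : I -> R) :
  (forall i j, L i -> U j -> a i <= b j) ->
  exists t, (forall i, L i -> a i <= t) /\ (forall j, U j -> t <= b j).
Proof.
move=> ab; have [i0 Li0|L0] := pickP L.
  case: (arg_maxP a Li0) => i Li imax.
  by exists (a i); split => // j Uj; apply: ab.
have [j0 Uj0|U0] := pickP U.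
  case: (arg_minP b Uj0) => j Uj jmin.
  by exists (b j); split => // i; rewrite L0.
by exists 0; split => i; rewrite ?L0 ?U0.
Qed.

Lemma exists_min_finite_cover (X : Type) (I : finType) (J : pred I)
    (P : X -> Prop) (f : X -> R) (g : I -> X) (val : I -> R) :
  (exists x, P x) ->
  (forall i, J i -> P (g i) /\ f (g i) <= val i) ->
  (forall x, P x -> exists2 i, J i & val i <= f x) ->
  exists2 x, P x & forall y, P y -> f x <= f y.
Proof.
move=> [x0 Px0] hg hcover; have [i0 Ji0 _] := hcover x0 Px0.
case: (arg_minP val Ji0) => i Ji imin; have [Pgi gi_le] := hg i Ji.
exists (g i) => // y Py; have [j Jj vj] := hcover y Py.
by apply: le_trans gi_le (le_trans (imin j Jj) vj).
Qed.

End Minimizers.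

Section MarginClassifier.
Variables (R : realType) (r s : nat) (x : 'I_r -> 'rV[R]_s) (c : 'I_r -> R).
Hypothesis c_sign : forall i, c i = 1 \/ c i = -1.

Definition separates (S : {set 'I_r}) (w : 'rV[R]_s) (w0 : R) :=
  forall i, i \in S -> 1 <= c i * (dotv w (x i) + w0).

Definition margin_set (S : {set 'I_r}) : set 'rV[R]_s :=
  [set w | forall i j, [/\ i \in S, j \in S, c i = 1 & c j = -1] ->
     2 <= dotv w (x i - x j)].

Lemma closed_margin_set S : closed (margin_set S).
Proof.
apply: closed_forall => i; apply: closed_forall_imp => j.
apply: closed_le_continuous; first exact: cst_continuous.
by apply: continuous_dotv => k; [exact: coord_continuous|exact: cst_continuous].
Qed.

Lemma margin_setP S w : margin_set S w <-> exists w0, separates S w w0.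
Proof.
split=> [hw|[w0 hw] i j [iS jS ci cj]]; last first.
  by have := hw i iS; have := hw j jS; rewrite ci cj dotvBr; lra.
have [w0 [lower upper]] : exists w0,
    (forall i, (i \in S) && (c i == 1) -> 1 - dotv w (x i) <= w0) /\
    (forall j, (j \in S) && (c j == -1) -> w0 <= -1 - dotv w (x j)).
  apply: exists_between => i j /andP[iS /eqP ci] /andP[jS /eqP cj].
  by have := hw i j (And4 iS jS ci cj); rewrite dotvBr; lra.
exists w0 => i iS; have [ci|ci] := c_sign i.
  by have := lower i; rewrite iS ci eqxx => /(_ isT); lra.
by have := upper i; rewrite iS ci eqxx => /(_ isT); lra.
Qed.

Definition violated (w : 'rV[R]_s) (w0 : R) : {set 'I_r} :=
  [set i | c i * (dotv w (x i) + w0) < 1].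

Lemma primal_objE lam w w0 :
  primal_obj x c lam w w0 = 2^-1 * sqnorm w + lam * #|violated w w0|%:R.
Proof.
congr (_ + lam * _); rewrite -sumr_const [RHS]big_mkcond /=.
by apply: eq_bigr => i _; rewrite inE /step01 subr_gt0.
Qed.

Lemma violated_sub S w w0 : separates S w w0 -> violated w w0 \subset ~: S.
Proof.
by move=> hw; apply/fintype.subsetP => i; rewrite !inE ltNge; apply: contraNN; apply: hw.
Qed.

Lemma separates_satisfied w w0 : separates (~: violated w w0) w w0.
Proof. by move=> i; rewrite !inE -leNgt. Qed.

Lemma primal_min lam : 0 < lam ->
  exists (w : 'rV[R]_s) (w0 : R), forall (w' : 'rV[R]_s) (w0' : R),
    primal_obj x c lam w w0 <= primal_obj x c lam w' w0'.
Proof.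
move=> lam_gt0.
have best_on S : exists p : 'rV[R]_s * R, margin_set S !=set0 ->
    separates S p.1 p.2 /\ forall w w0, separates S w w0 -> sqnorm p.1 <= sqnorm w.
  have [ne|empty] := pselect (margin_set S !=set0); last by exists (0, 0) => /empty.
  have [w /margin_setP[w0 hw] wmin] := closed_min_sqnorm ne (@closed_margin_set S).
  exists (w, w0) => _; split => // w' w0' hw'.
  by apply: wmin; apply/margin_setP; exists w0'.
have [g hg] := choice best_on.
pose val S := 2^-1 * sqnorm (g S).1 + lam * #|~: S|%:R.
suff [[w w0] _ wmin] : exists2 p : 'rV[R]_s * R, True &
    forall q, True -> primal_obj x c lam p.1 p.2 <= primal_obj x c lam q.1 q.2.
  by exists w, w0 => w' w0'; apply: wmin (w', w0') I.
apply: (exists_min_finite_cover (J := fun S => `[< margin_set S !=set0 >]) (g := g)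
  (val := val)).
- by exists (0, 0).
- move=> S /asboolP ne; split => //; have [hS _] := hg S ne.
  rewrite primal_objE lerD2l ler_pM2l // ler_nat.
  exact/subset_leq_card/violated_sub.
- move=> [w w0] _; set S := ~: violated w w0.
  have ne : margin_set S !=set0.
    by exists w; apply/margin_setP; exists w0; apply: separates_satisfied.
  exists S; first exact/asboolP.
  have [_ gmin] := hg S ne.
  rewrite primal_objE /val finset.setCK lerD2r ler_pM2l ?invr_gt0 //.
  exact/gmin/separates_satisfied.
Qed.

Definition dual_vec (z : 'I_r -> R) : 'rV[R]_s := \sum_i (c i * z i) *: x i.

Definition dual_smooth (z : 'I_r -> R) : R := 2^-1 * sqnorm (dual_vec z) - \sum_i z i.

Lemma dual_objE mu z :
  dual_obj x c mu z = dual_smooth z + \sum_i mu i * ind_nz (z i).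
Proof. by []. Qed.

Lemma ind_nz_ge0 (t : R) : 0 <= ind_nz t.
Proof. by rewrite /ind_nz; case: ifP. Qed.

Lemma ind_nz_le1 (t : R) : ind_nz t <= 1.
Proof. by rewrite /ind_nz; case: ifP. Qed.

Definition signed_points : 'M[R]_(r, s) := \matrix_i (c i *: x i).

Lemma mulmx_signed_points (v : 'rV[R]_r) : v *m signed_points = dual_vec (v ord0).
Proof. by rewrite mulmx_sum_row; apply: eq_bigr => i _; rewrite rowK scalerA mulrC. Qed.

Lemma continuous_dual_smooth : continuous (fun v : 'rV[R]_r => dual_smooth (v ord0)).
Proof.
have -> : (fun v : 'rV[R]_r => dual_smooth (v ord0)) =
    fun v => 2^-1 * sqnorm (v *m signed_points) - \sum_i v ord0 i.
  by apply/funext => v; rewrite mulmx_signed_points.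
have sq : continuous (fun v : 'rV[R]_r => sqnorm (v *m signed_points)).
  by apply: continuous_dotv => k; exact: continuous_mulmx_coord.
have sum : continuous (fun v : 'rV[R]_r => \sum_i v ord0 i).
  by apply: continuous_sum => i; exact: coord_continuous.
move=> v; have half := @cst_continuous _ _ (2^-1 : R) v.
exact: continuousB (continuousM half (sq v)) (sum v).
Qed.

Lemma dual_sum_le w w0 : (forall i, 1 <= c i * (dotv w (x i) + w0)) ->
  forall z, dual_feasible c z -> dual_smooth z <= 0 -> \sum_i z i <= 2 * sqnorm w.
Proof.
move=> hw z [cz0 z0]; rewrite /dual_smooth; set V := dual_vec z => smooth_le0.
have sum_le : \sum_i z i <= dotv w V.
  rewrite dotv_sumr [leRHS](eq_bigr (fun i =>
      z i * (c i * (dotv w (x i) + w0)) - w0 * (c i * z i))); last first.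
    by move=> i _; rewrite dotvZr; ring.
  rewrite sumrB -mulr_sumr cz0 mulr0 subr0; apply: ler_sum => i _.
  by rewrite -{1}(mulr1 (z i)) ler_wpM2l.
have := sqnorm_ge0 (V + (-2) *: w).
rewrite sqnormD sqnormZ dotvZr (dotvC V w) sqrrN; lra.
Qed.

Definition dual_piece (B : R) (T : {set 'I_r}) : set 'rV[R]_r :=
  [set v | dual_feasible c (v ord0) /\
    (forall i, i \notin T -> v ord0 i = 0) /\ \sum_i v ord0 i <= B].

Lemma dual_piece0 B T : 0 <= B -> dual_piece B T 0.
Proof.
move=> B0; split; first by split=> [|i]; rewrite ?big1 // => *; rewrite mxE ?mulr0.
by split=> [i _|]; rewrite ?big1 // => *; rewrite mxE.
Qed.

Lemma dual_piece_min B T : 0 <= B -> exists2 v, dual_piece B T v &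
  forall u, dual_piece B T u -> dual_smooth (v ord0) <= dual_smooth (u ord0).
Proof.
move=> B0; apply: (rV_closed_bounded_min (M := B) _ _ _ continuous_dual_smooth).
- by exists 0; exact: dual_piece0.
- apply: closedI; first apply: closedI.
  + apply: closed_eq_continuous; last exact: cst_continuous.
    apply: continuous_sum => i v; apply: continuousM;
      [exact: cst_continuous|exact: coord_continuous].
  + apply: closed_forall => i; apply: closed_le_continuous;
      [exact: cst_continuous|exact: coord_continuous].
  apply: closedI.
    apply: closed_forall_imp => i; apply: closed_eq_continuous;
      [exact: coord_continuous|exact: cst_continuous].
  apply: closed_le_continuous; last exact: cst_continuous.
  by apply: continuous_sum => i; exact: coord_continuous.
- move=> v [[_ v0] [_ sum_le]] j; rewrite ger0_norm //; apply: le_trans sum_le.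
  by rewrite (bigD1 j) //= lerDl; apply: sumr_ge0.
Qed.

Lemma dual_min (mu : 'I_r -> R) (w : 'rV[R]_s) (w0 : R) :
  (forall i, 0 <= mu i) -> (forall i, 1 <= c i * (dotv w (x i) + w0)) ->
  exists2 z, dual_feasible c z &
    forall z', dual_feasible c z' -> dual_obj x c mu z <= dual_obj x c mu z'.
Proof.
move=> mu0 hw; set B := 2 * sqnorm w; have B0 : 0 <= B by rewrite mulr_ge0 ?sqnorm_ge0.
have piece_min T : exists v, dual_piece B T v /\
    forall u, dual_piece B T u -> dual_smooth (v ord0) <= dual_smooth (u ord0).
  by have [v ? ?] := dual_piece_min T B0; exists v.
have [m hm] := choice piece_min.
pose val T := dual_smooth (m T ord0) + \sum_(i in T) mu i.
apply: (exists_min_finite_cover (J := predT) (g := fun T => m T ord0) (val := val)).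
- by exists (fun=> 0); split=> [|i //]; rewrite big1 // => i; rewrite mulr0.
- move=> T _; have [[feas [supp _]] _] := hm T; split => //.
  rewrite dual_objE /val lerD2l [leRHS]big_mkcond; apply: ler_sum => i _.
  case: ifP => iT; last by rewrite supp ?iT // /ind_nz eqxx mulr0.
  by rewrite ler_piMr // ind_nz_le1.
(* Points with sum z > B have positive objective, by [dual_sum_le]. *)
- move=> z feas; have [small|big] := leP (\sum_i z i) B.
    pose T := [set i | z i != 0]%SET; exists T => //.
    pose v : 'rV[R]_r := \row_i z i.
    have zv : v ord0 = z by apply/funext => i; rewrite mxE.
    have /(hm T).2 : dual_piece B T v.
      by rewrite /dual_piece /= zv; split=> //; split=> // i; rewrite inE negbK => /eqP.
    rewrite zv dual_objE /val -(lerD2r (\sum_(i in T) mu i)) => /le_trans; apply.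
    rewrite lerD2l big_mkcond; apply: ler_sum => i _.
    by rewrite inE /ind_nz; case: ifP; rewrite ?mulr1 ?mulr0.
  exists finset.set0 => //; rewrite /val big_set0 addr0.
  apply: le_trans ((hm finset.set0).2 _ (dual_piece0 _ B0)) _.
  have -> : dual_smooth ((0 : 'rV[R]_r) ord0) = 0.
    rewrite /dual_smooth /dual_vec !big1 ?sqnorm0 ?mulr0 ?subrr // => i _.
      by rewrite mxE.
    by rewrite mxE mulr0 scale0r.
  have smooth_gt0 : 0 < dual_smooth z.
    by rewrite ltNge; apply/negP => /(dual_sum_le hw feas); rewrite leNgt big.
  rewrite dual_objE; apply/ltW/(lt_le_trans smooth_gt0); rewrite lerDl.
  by apply: sumr_ge0 => i _; rewrite mulr_ge0 ?ind_nz_ge0.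
Qed.

Lemma separator_or_balanced_combination :
  (exists (w : 'rV[R]_s) (w0 : R), forall i, 1 <= c i * (dotv w (x i) + w0)) \/
  exists d, [/\ dual_feasible c d, \sum_i d i = 1 & dual_vec d = 0].
Proof.
have [r0|r_gt0] := posnP r.
  have no_index : 'I_r -> False by rewrite r0 => -[].
  by left; exists 0, 0 => i; case: (no_index i).
(* Minimum-norm point of the convex hull of the rows (c_i x_i, c_i). *)
pose C : 'cV[R]_r := \col_i c i.
have [d [d0 d1] dmin] := simplex_min_norm (row_mx signed_points C) r_gt0.
set U := dual_vec (d ord0); set t := \sum_i c i * d ord0 i.
have dC : (d *m C) ord0 ord0 = t.
  by rewrite mxE; apply: eq_bigr => i _; rewrite mxE mulrC.
have dY : d *m row_mx signed_points C = row_mx U (d *m C).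
  by rewrite mul_mx_row mulmx_signed_points.
rewrite dY in dmin; have [/eqP|nz] := eqVneq (row_mx U (d *m C)) 0.
  rewrite row_mx_eq0 => /andP[/eqP U0 /eqP dC0].
  by right; exists (d ord0); split=> //; split=> //; rewrite -/t -dC dC0 mxE.
left; set H := sqnorm (row_mx U (d *m C)).
have H_gt0 : 0 < H by rewrite lt_def sqnorm_eq0 nz sqnorm_ge0.
exists (H^-1 *: U), (H^-1 * t) => j.
have := dmin j; rewrite row_row_mx rowK dotv_row_mx dotvZr [dotv _ (row j C)]/dotv.
rewrite big_ord1 dC !mxE -/H => le_H.
rewrite dotvZl (_ : c j * _ = H^-1 * (c j * dotv U (x j) + t * c j)); last by ring.
by rewrite -(mulVf (lt0r_neq0 H_gt0)) ler_pM2l // invr_gt0.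
Qed.

Lemma separates_of_dual_min (mu : 'I_r -> R) : (forall i, 0 <= mu i) ->
  (exists z, dual_feasible c z /\
    forall z', dual_feasible c z' -> dual_obj x c mu z <= dual_obj x c mu z') ->
  exists (w : 'rV[R]_s) (w0 : R), forall i, 1 <= c i * (dotv w (x i) + w0).
Proof.
move=> mu0 [z [_ zmin]].
have [//|[d [[cd0 d0] d1 dV0]]] := separator_or_balanced_combination.
pose t := `|\sum_i mu i - dual_obj x c mu z| + 1.
have t0 : 0 <= t by rewrite addr_ge0.
have td_feas : dual_feasible c (fun i => t * d i).
  split=> [|i]; last by rewrite mulr_ge0.
  by under eq_bigr do rewrite mulrCA; rewrite -mulr_sumr cd0 mulr0.
have := zmin _ td_feas; rewrite [X in _ <= X]dual_objE /dual_smooth.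
have -> : dual_vec (fun i => t * d i) = 0.
  rewrite /dual_vec; under eq_bigr do rewrite mulrCA -scalerA.
  by rewrite -scaler_sumr -/(dual_vec d) dV0 scaler0.
rewrite sqnorm0 mulr0 sub0r -mulr_sumr d1 mulr1.
have : \sum_i mu i * ind_nz (t * d i) <= \sum_i mu i.
  by apply: ler_sum => i _; rewrite ler_piMr ?ind_nz_le1.
have := ler_norm (\sum_i mu i - dual_obj x c mu z); rewrite /t; lra.
Qed.

End MarginClassifier.

Theorem mainTheorem8 (R : realType) (r s : nat) (x : 'I_r -> 'rV[R]_s)
  (c : 'I_r -> R) (lam : R) (mu : 'I_r -> R)
  (hc : forall i, c i = 1 \/ c i = -1) (hlam : 0 < lam)
  (hmu : forall i, 0 < mu i) :
  (exists (w : 'rV[R]_s) (w0 : R), forall (w' : 'rV[R]_s) (w0' : R),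
      primal_obj x c lam w w0 <= primal_obj x c lam w' w0')
  /\
  ((exists z : 'I_r -> R, dual_feasible c z /\
      forall z' : 'I_r -> R, dual_feasible c z' ->
        dual_obj x c mu z <= dual_obj x c mu z')
   <->
   (exists (w : 'rV[R]_s) (w0 : R), forall i, 1 <= c i * (dotv w (x i) + w0))).
Proof.
have mu_ge0 i : 0 <= mu i by exact: ltW.
split; first exact: (primal_min x hc hlam).
split; first exact: separates_of_dual_min mu_ge0.
by move=> [w [w0 hw]]; have [z ? ?] := dual_min mu_ge0 hw; exists z.
Qed.
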